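(* Let $X$ be a Tychonoff space. The following are equivalent: (1) $C_p(X)$ is strictly H-bounded; (2) $C_p(X)$ is H-bounded; (3) $C_p(X)$ is strictly M-bounded; (4) $C_p(X)$ is M-bounded; (5) $X$ is pseudocompact; (6) $C_m(X)$ is first countable; (7) $C_m(X)$ is strictly Fréchet–Urysohn; (8) $C_m(X)$ has countable strong fan tightness; (9) $C_m(X)$ has countable fan tightness; (10) $C_m(X)$ has countable tightness; (11) $C_m(X)$ is completely metrizable; (12) $C_m(X)$ is Čech-complete; (13) $C_m(X)$ is hereditarily Baire.
   Context: $C(X)$ is the set of continuous real-valued functions on a Tychonoff space $X$, regarded as a Hausdorff topological group under pointwise addition with identity the constant zero function $f_0$. $C_p(X)$ is $C(X)$ with the topology of pointwise convergence (basic neighborhoods of $f$: $\{g:|g(x)-f(x)|<\varepsilon \ \forall x\in F\}$, $F\subset X$ finite, $\varepsilon>0$). $C_m(X)$ is $C(X)$ with the $m$-topology (fine/Whitney topology): basic neighborhoods of $f$ are $\{g\in C(X): |g(x)-f(x)|<\varepsilon(x)\ \forall x\in X\}$ where $\varepsilon\in C(X)$ is strictly positive. For a topological group $G$ with identity $e$: $G$ is M-bounded (Menger-bounded) if for every sequence $(U_n)_{n\in\mathbb N}$ of neighborhoods of $e$ there are finite sets $A_n\subset G$ with $G=\bigcup_n A_n\cdot U_n$; $G$ is H-bounded (Hurewicz-bounded) if for every such sequence there are finite $A_n\subset G$ such that each $x\in G$ belongs to $A_n\cdot U_n$ for all but finitely many $n$. The M-game on $G$: in round $n$ player ONE chooses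 a (basic) neighborhood $U_n$ of $e$ and TWO responds with a finite set $A_n\subset G$; TWO wins if $G=\bigcup_n A_nU_n$. $G$ is strictly M-bounded if TWO has a winning strategy in this game. Strictly H-bounded is defined analogously, TWO winning when each $x\in G$ lies in all but finitely many $A_nU_n$. A space $Y$ has countable tightness if whenever $y\in\overline{A}$ there is countable $B\subset A$ with $y\in\overline B$; countable fan tightness if for every $y$ and every sequence $(A_n)$ with $y\in\bigcap_n\overline{A_n}$ there are finite $B_n\subset A_n$ with $y\in\overline{\bigcup_n B_n}$; countable strong fan tightness if in the same situation there are points $b_n\in A_n$ with $y\in\overline{\{b_n:n\in\mathbb N\}}$; $Y$ is strictly Fréchet–Urysohn if for every $y$ and every sequence $(A_n)$ with $y\in\bigcap_n \overline{A_n}$ there are $a_n\in A_n$ with $a_n\to y$. Hereditarily Baire means every closed subspace is a Baire space. *)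

From Stdlib Require Import Reals List.
Open Scope R_scope.

Record TopSpace := mkTop {
  pt :> Type;
  isopen : (pt -> Prop) -> Prop;
  open_full : isopen (fun _ => True);
  open_inter : forall U V, isopen U -> isopen V -> isopen (fun x => U x /\ V x);
  open_union : forall F : (pt -> Prop) -> Prop,
      (forall U, F U -> isopen U) -> isopen (fun x => exists U, F U /\ U x)
}.

Definition rcontinuous (X : TopSpace) (f : X -> R) : Prop :=
  forall x eps, 0 < eps ->
    exists U, isopen X U /\ U x /\ forall y, U y -> Rabs (f y - f x) < eps.

Definition closed_in (X : TopSpace) (F : X -> Prop) : Prop :=
  isopen X (fun x => ~ F x).

Definition tychonoff (X : TopSpace) : Prop :=
  (forall x y : X, x <> y -> exists U, isopen X U /\ U x /\ ~ U y) /\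
  (forall (F : X -> Prop) (x : X), closed_in X F -> ~ F x ->
     exists f : X -> R, rcontinuous X f /\ f x = 0 /\ forall y, F y -> f y = 1).

Definition pseudocompact (X : TopSpace) : Prop :=
  forall f : X -> R, rcontinuous X f -> exists M, forall x, Rabs (f x) <= M.

Definition CX (X : TopSpace) : Type := { f : X -> R | rcontinuous X f }.

Definition ev {X : TopSpace} (g : CX X) (x : X) : R := proj1_sig g x.

Lemma const0_cont (X : TopSpace) : rcontinuous X (fun _ => 0).
Proof.
  intros x eps He. exists (fun _ => True). split; [apply open_full|split; [exact I|]].
  intros y _. unfold Rminus. rewrite Rplus_opp_r, Rabs_R0. exact He.
Qed.

Definition f0 (X : TopSpace) : CX X := exist _ (fun _ => 0) (const0_cont X).

Definition Cp_open (X : TopSpace) (O : CX X -> Prop) : Prop :=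
  forall f, O f -> exists (F : list X) (eps : R), 0 < eps /\
    forall g : CX X, (forall x, In x F -> Rabs (ev g x - ev f x) < eps) -> O g.

Definition Cm_open (X : TopSpace) (O : CX X -> Prop) : Prop :=
  forall f, O f -> exists e : CX X, (forall x, 0 < ev e x) /\
    forall g : CX X, (forall x, Rabs (ev g x - ev f x) < ev e x) -> O g.

Definition nbhd0 (X : TopSpace) (op : (CX X -> Prop) -> Prop) (N : CX X -> Prop) : Prop :=
  exists O, op O /\ O (f0 X) /\ forall g, O g -> N g.

Definition plusset (X : TopSpace) (A : list (CX X)) (U : CX X -> Prop) (g : CX X) : Prop :=
  exists a, In a A /\ exists u, U u /\ forall x, ev g x = ev a x + ev u x.

Definition Mbounded (X : TopSpace) (op : (CX X -> Prop) -> Prop) : Prop :=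
  forall U : nat -> (CX X -> Prop), (forall n, nbhd0 X op (U n)) ->
    exists A : nat -> list (CX X), forall g, exists n, plusset X (A n) (U n) g.

Definition Hbounded (X : TopSpace) (op : (CX X -> Prop) -> Prop) : Prop :=
  forall U : nat -> (CX X -> Prop), (forall n, nbhd0 X op (U n)) ->
    exists A : nat -> list (CX X), forall g, exists N, forall n, (N <= n)%nat ->
      plusset X (A n) (U n) g.

(* A strategy of TWO: maps the list of ONE's moves so far (U_0,...,U_n) to A_n. *)
Definition history {T : Type} (U : nat -> T) (n : nat) : list T := map U (seq 0 (S n)).

Definition strictly_Mbounded (X : TopSpace) (op : (CX X -> Prop) -> Prop) : Prop :=
  exists sigma : list (CX X -> Prop) -> list (CX X),
    forall U : nat -> (CX X -> Prop), (forall n, nbhd0 X op (U n)) ->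
      forall g, exists n, plusset X (sigma (history U n)) (U n) g.

Definition strictly_Hbounded (X : TopSpace) (op : (CX X -> Prop) -> Prop) : Prop :=
  exists sigma : list (CX X -> Prop) -> list (CX X),
    forall U : nat -> (CX X -> Prop), (forall n, nbhd0 X op (U n)) ->
      forall g, exists N, forall n, (N <= n)%nat ->
        plusset X (sigma (history U n)) (U n) g.

Section Gen.
Variable T : Type.
Variable op : (T -> Prop) -> Prop.

Definition closure (A : T -> Prop) (y : T) : Prop :=
  forall U, op U -> U y -> exists a, A a /\ U a.

Definition first_countable : Prop :=
  forall y, exists B : nat -> (T -> Prop), (forall n, op (B n) /\ B n y) /\
    forall U, op U -> U y -> exists n, forall t, B n t -> U t.

Definition countable_set (B : T -> Prop) : Prop :=
  exists s : nat -> T, forall b, B b -> exists n, s n = b.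

Definition countable_tightness : Prop :=
  forall (A : T -> Prop) y, closure A y ->
    exists B, (forall b, B b -> A b) /\ countable_set B /\ closure B y.

Definition countable_fan_tightness : Prop :=
  forall (A : nat -> T -> Prop) y, (forall n, closure (A n) y) ->
    exists B : nat -> list T, (forall n b, In b (B n) -> A n b) /\
      closure (fun t => exists n, In t (B n)) y.

Definition countable_strong_fan_tightness : Prop :=
  forall (A : nat -> T -> Prop) y, (forall n, closure (A n) y) ->
    exists b : nat -> T, (forall n, A n (b n)) /\ closure (fun t => exists n, b n = t) y.

Definition converges (a : nat -> T) (y : T) : Prop :=
  forall U, op U -> U y -> exists N, forall n, (N <= n)%nat -> U (a n).

Definition strictly_Frechet_Urysohn : Prop :=
  forall (A : nat -> T -> Prop) y, (forall n, closure (A n) y) ->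
    exists a : nat -> T, (forall n, A n (a n)) /\ converges a y.

Definition completely_metrizable : Prop :=
  exists d : T -> T -> R,
    (forall x y, 0 <= d x y) /\ (forall x y, d x y = 0 <-> x = y) /\
    (forall x y, d x y = d y x) /\ (forall x y z, d x z <= d x y + d y z) /\
    (forall U, op U <-> forall x, U x -> exists r, 0 < r /\ forall y, d x y < r -> U y) /\
    (forall s : nat -> T,
       (forall eps, 0 < eps -> exists N, forall m n, (N <= m)%nat -> (N <= n)%nat ->
           d (s m) (s n) < eps) ->
       exists l, forall eps, 0 < eps -> exists N, forall n, (N <= n)%nat -> d (s n) l < eps).

Definition dense_in (F W : T -> Prop) : Prop :=
  forall O, op O -> (exists t, F t /\ O t) -> exists t, F t /\ O t /\ W t.

Definition hereditarily_Baire : Prop :=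
  forall F : T -> Prop, op (fun t => ~ F t) ->
    forall W : nat -> (T -> Prop), (forall n, op (W n)) -> (forall n, dense_in F (W n)) ->
      dense_in F (fun t => forall n, W n t).
End Gen.

Definition compact (K : TopSpace) : Prop :=
  forall Fam : (K -> Prop) -> Prop, (forall U, Fam U -> isopen K U) ->
    (forall k, exists U, Fam U /\ U k) ->
    exists l : list (K -> Prop), (forall U, In U l -> Fam U) /\ forall k, exists U, In U l /\ U k.

Definition hausdorff (K : TopSpace) : Prop :=
  forall x y : K, x <> y -> exists U V, isopen K U /\ isopen K V /\ U x /\ V y /\
    forall z, ~ (U z /\ V z).

(* Čech-complete: G_delta in some Hausdorff compactification *)
Definition Cech_complete (T : Type) (op : (T -> Prop) -> Prop) : Prop :=
  exists (K : TopSpace) (e : T -> K),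
    compact K /\ hausdorff K /\
    (forall t1 t2, e t1 = e t2 -> t1 = t2) /\
    (forall W, isopen K W -> op (fun t => W (e t))) /\
    (forall O, op O -> exists W, isopen K W /\ forall t, O t <-> W (e t)) /\
    (forall W, isopen K W -> (exists k, W k) -> exists t, W (e t)) /\
    exists Wn : nat -> (K -> Prop), (forall n, isopen K (Wn n)) /\
      forall k, (forall n, Wn n k) <-> exists t, e t = k.

(* If X is pseudocompact, a positive continuous function on X is bounded away from 0, so the
   m-topology is induced by the complete metric sup_x min(1, |f x - g x|).  This gives first
   countability and hence all the tightness properties, Cech-completeness (C(X) is a G_delta in the
   closure of its image under t |-> (d(t, i))_i in [0,1]^C(X)) and hence hereditary Baireness.  On
   the pointwise side, TWO wins the Hurewicz game by covering, in round n, all functions bounded by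
   n with finitely many translates of ONE's neighbourhood.
   Conversely, let f >= 0 be continuous and unbounded, with f(x_n) >= n.  A positive continuous h
   on R with prescribed small values at the f(x_n) gives a positive e = h o f; the function 1/e
   defeats M-boundedness, e separates f0 from any countable set of positive functions, and bumps
   built from e show that the closed set of functions vanishing where f is large is not Baire. *)

From HB Require Import structures.
From mathcomp Require all_boot all_order all_algebra all_classical all_reals all_analysis.
From mathcomp Require Rstruct Rstruct_topology.
From Stdlib Require Import Reals List Classical.

Module CubeCompactness.
Import all_boot all_order all_algebra all_classical all_reals all_analysis.
Import Rstruct Rstruct_topology.
Import Order.TTheory GRing.Theory Num.Theory.
Local Open Scope classical_set_scope.
Local Open Scope ring_scope.

Definition Pt (I : Type) := prod_topology (fun _ : {classic I} => R).
HB.instance Definition _ (I : Type) := Topological.on (Pt I).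
HB.instance Definition _ (I : Type) := isPointed.Build (Pt I) (fun _ => 0%R).

Section Cube.
Variable I : Type.
Let J := {classic I}.
Let P := Pt I.

Definition boxset (y : P) (l : list I) (eps : R) : set P :=
  [set z : P | forall i, List.In i l -> `|z i - y i| < eps].

Lemma boxset_open y l eps : open (boxset y l eps).
Proof.
elim: l => [|i l IH].
  rewrite (_ : boxset y [::] eps = setT); first exact: openT.
  by apply/seteqP; split => z //= _ i [].
rewrite (_ : boxset y (i :: l) eps =
   ((@proj J (fun _ => R) i) @^-1` (ball (y i) eps)) `&` boxset y l eps).
  apply: openI => //; apply: open_comp; last exact: (@ball_open R R^o).
  move=> z _; exact: proj_continuous.
apply/seteqP; split => z /=.
  move=> H; split; last by move=> j Hj; apply: H; right.
  by rewrite /ball /= distrC; apply: H; left.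
move=> [H1 H2] j [<-|Hj]; last exact: H2.
by move: H1; rewrite /ball /= distrC.
Qed.

Lemma In_mem (T : eqType) (x : T) (s : list T) : List.In x s <-> x \in s.
Proof.
elim: s => [|a s IH] //=; rewrite in_cons; split.
  by move=> [->|/IH ->]; rewrite ?eqxx ?orbT.
by case/orP => [/eqP ->|/IH]; [left|right].
Qed.

Lemma closed_of_box_limits (S : (I -> R) -> Prop) :
 (forall y, (forall (l : list I) (eps : R), Rlt 0 eps ->
      exists z, S z /\ forall i, List.In i l -> Rlt (Rabs (Rminus (z i) (y i))) eps) -> S y) ->
 closed (S : set P).
Proof.
move=> Scl; rewrite -[S : set P]setCK; apply: open_closedC; rewrite openE => y nSy.
have [l [eps [eps0 Hl]]] : exists l eps, Rlt 0 eps /\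
    forall z, S z -> ~ (forall i, List.In i l -> Rlt (Rabs (Rminus (z i) (y i))) eps).
  apply: NNPP => H; apply: nSy; apply: Scl => l eps e0.
  apply: NNPP => H2; apply: H; exists l, eps; split => // z Sz Hz.
  by apply: H2; exists z.
apply: (@filterS _ _ _ (boxset y l eps)).
  by move=> z Hz Sz; apply: (Hl z Sz) => i Hi; apply/RltP; apply: Hz.
apply: open_nbhs_nbhs; split; first exact: boxset_open.
by move=> i _; rewrite subrr normr0; apply/RltP.
Qed.

(* Tychonoff's theorem for [0,1]^I, with open sets described by finitely supported boxes. *)
Lemma closed_subset_of_cube_compact (S : (I -> R) -> Prop) :
 (forall y, S y -> forall i, Rle 0 (y i) /\ Rle (y i) 1) ->
 (forall y, (forall (l : list I) (eps : R), Rlt 0 eps ->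
      exists z, S z /\ forall i, List.In i l -> Rlt (Rabs (Rminus (z i) (y i))) eps) -> S y) ->
 forall Fam : ((I -> R) -> Prop) -> Prop,
 (forall U, Fam U -> forall y, S y -> U y -> exists l eps, Rlt 0 eps /\
     forall z, S z -> (forall i, List.In i l -> Rlt (Rabs (Rminus (z i) (y i))) eps) -> U z) ->
 (forall y, S y -> exists U, Fam U /\ U y) ->
 exists L, (forall U, List.In U L -> Fam U) /\ forall y, S y -> exists U, List.In U L /\ U y.
Proof.
move=> Sb Scl Fam Fop Fcov.
have cubeC : compact.compact [set f : P | forall i, `[0%R, 1%R]%classic (f i)].
  exact: (@tychonoff J (fun _ => R) (fun _ => `[0%R, 1%R]%classic)
            (fun _ => @segment_compact R 0%R 1%R)).
have Sclo := closed_of_box_limits S Scl.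
have Sco : compact.compact (S : set P).
  apply: subclosed_compact Sclo cubeC _ => y Sy i.
  have [/RleP h1 /RleP h2] := Sb y Sy i.
  by rewrite /= in_itv /= h1 h2.
move: Sco; rewrite (@compact_cover P) => Sco.
pose K := {classic (set P)}.
(* Fam consists of relatively open subsets of S; G U is open in P with the same trace on S. *)
pose G (U : K) : set P := [set z | exists (k : P) l eps, U k /\ S k /\ Rlt 0 eps /\
   (forall k', S k' -> (forall i, List.In i l -> Rlt (Rabs (Rminus (k' i) (k i))) eps) -> U k') /\
   boxset k l eps z].
have Gop : forall U : K, [set U | Fam U] U -> open (G U).
  move=> U _; rewrite openE => z [k [l [eps [Uk [Sk [e0 [Hw Hb]]]]]]].
  have : open (boxset k l eps) := boxset_open k l eps.
  rewrite openE => /(_ z Hb); apply: filterS => w Hw'.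
  by exists k, l, eps.
have Scov : (S : set P) `<=` cover [set U : K | Fam U] G.
  move=> y Sy; have [U [FU Uy]] := Fcov y Sy.
  exists U => //.
  have [l [eps [e0 Hl]]] := Fop U FU y Sy Uy.
  exists y, l, eps; do 4 (split => //).
  by move=> i _; rewrite subrr normr0; apply/RltP.
have [D' sD Dcov] := Sco K [set U : K | Fam U] G Gop Scov.
exists (finmap.enum_fset D'); split.
  by move=> U /(In_mem K U) /sD; rewrite inE.
move=> y Sy; have [U HU Gy] := Dcov y Sy.
exists U; split; first exact/(In_mem K U).
move: Gy => [k [l [eps [Uk [Sk [e0 [Hw Hb]]]]]]].
by apply: Hw => // i Hi; apply/RltP; apply: Hb.
Qed.
End Cube.
End CubeCompactness.

From Pilot Require Import Defs.
From Stdlib Require Import ZArith Lra Lia Cantor.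
From Stdlib Require Import ClassicalEpsilon FunctionalExtensionality ProofIrrelevance PropExtensionality.
Open Scope R_scope.

Lemma choice_fun {I A : Type} (P : I -> A -> Prop) :
  (forall i, exists a, P i a) -> exists a : I -> A, forall i, P i (a i).
Proof.
  intros H. exists (fun n => proj1_sig (constructive_indefinite_description _ (H n))).
  intros n. exact (proj2_sig (constructive_indefinite_description _ (H n))).
Qed.

Lemma list_choice {A B : Type} (P : A -> B -> Prop) (L : list A) :
  (forall a, In a L -> exists b, P a b) ->
  exists L' : list B, (forall b, In b L' -> exists a, P a b) /\
    forall a, In a L -> exists b, In b L' /\ P a b.
Proof.
  induction L as [|a L IH]; intros H; [exists nil; split; intros ? []|].
  destruct IH as [L' [H1 H2]]; [intros a' Ha'; apply H; right; exact Ha'|].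
  destruct (H a (or_introl eq_refl)) as [b Hb]. exists (b :: L'). split.
  - intros b' [<-|Hb']; [exists a; exact Hb|exact (H1 b' Hb')].
  - intros a' [<-|Ha']; [exists b; split; [left|]; auto|].
    destruct (H2 a' Ha') as [b' [Hb'1 Hb'2]]. exists b'. split; [right|]; auto.
Qed.

Lemma dependent_choice {A : Type} (P : A -> Prop) (Step : nat -> A -> A -> Prop) (a0 : A) :
  P a0 -> (forall n a, P a -> exists b, P b /\ Step n a b) ->
  exists a : nat -> A, a O = a0 /\ forall n, P (a n) /\ Step n (a n) (a (S n)).
Proof.
  intros H0 Hstep.
  set (next := fun n (a : {a | P a}) =>
         constructive_indefinite_description _ (Hstep n (proj1_sig a) (proj2_sig a))).
  set (seqa := fix seqa (n : nat) : {a | P a} :=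
         match n with
         | O => exist _ a0 H0
         | S m => exist _ (proj1_sig (next m (seqa m))) (proj1 (proj2_sig (next m (seqa m))))
         end).
  exists (fun n => proj1_sig (seqa n)). split; [reflexivity|].
  intros n. split; [exact (proj2_sig (seqa n))|exact (proj2 (proj2_sig (next n (seqa n))))].
Qed.

Lemma exists_nat_ge (r : R) : exists N : nat, r <= INR N.
Proof. destruct (INR_unbounded r) as [N HN]. exists N. lra. Qed.

Lemma exists_inv_succ_le (eps : R) : 0 < eps -> exists N : nat, / (INR N + 1) <= eps.
Proof.
  intros He. destruct (exists_nat_ge (/ eps)) as [N HN]. exists N.
  assert (0 <= INR N) by apply pos_INR.
  rewrite <- (Rinv_inv eps). apply Rinv_le_contravar; [apply Rinv_0_lt_compat|]; lra.
Qed.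

Lemma Rabs_triang_sub (a b c : R) : Rabs (a - c) <= Rabs (a - b) + Rabs (b - c).
Proof.
  replace (a - c) with ((a - b) + (b - c)) by ring. apply Rabs_triang.
Qed.

Lemma continuity_pt_eps (h : R -> R) (t : R) : continuity_pt h t ->
  forall eps, 0 < eps -> exists d, 0 < d /\ forall s, Rabs (s - t) < d -> Rabs (h s - h t) < eps.
Proof.
  intros H eps He. destruct (H eps He) as [a [Ha Hs]]. exists a. split; [exact Ha|].
  intros s Hs'. destruct (Req_dec s t) as [->|Hne].
  - unfold Rminus. rewrite Rplus_opp_r, Rabs_R0. exact He.
  - apply (Hs s). split; [split; [exact I| congruence]| exact Hs'].
Qed.

Lemma continuity_pt_min (f g : R -> R) x : continuity_pt f x -> continuity_pt g x ->
  continuity_pt (fun s => Rmin (f s) (g s)) x.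
Proof.
  intros Hf Hg.
  apply (continuity_pt_locally_ext (fun s => /2 * (f s + g s - Rabs (f s - g s))) _ 1); [lra| |].
  - intros y _. unfold Rmin. destruct (Rle_dec (f y) (g y)).
    + rewrite Rabs_left1 by lra. field.
    + rewrite Rabs_right by lra. field.
  - apply (continuity_pt_scal (fun s => f s + g s - Rabs (f s - g s))).
    apply (continuity_pt_minus (fun s => f s + g s) (fun s => Rabs (f s - g s))).
    + apply continuity_pt_plus; assumption.
    + apply (continuity_pt_comp (fun s => f s - g s) Rabs).
      * apply continuity_pt_minus; assumption.
      * apply Rcontinuity_abs.
Qed.

Lemma continuity_pt_dist_plus (a b s : R) : continuity_pt (fun s => a + Rabs (s - b)) s.
Proof.
  apply continuity_pt_plus; [apply continuity_pt_const; intros ? ?; reflexivity|].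
  apply (continuity_pt_comp (fun s => s - b) Rabs); [|apply Rcontinuity_abs].
  apply continuity_pt_minus; [apply derivable_continuous_pt, derivable_pt_id|].
  apply continuity_pt_const. intros ? ?; reflexivity.
Qed.

Section Continuity.
Variable X : TopSpace.

Lemma rcont_ext (f g : X -> R) : (forall x, f x = g x) -> rcontinuous X f -> rcontinuous X g.
Proof. intros E. replace g with f by (apply functional_extensionality; exact E). auto. Qed.

Lemma rcont_comp (f : X -> R) (h : R -> R) : rcontinuous X f ->
  (forall x, continuity_pt h (f x)) -> rcontinuous X (fun x => h (f x)).
Proof.
  intros Hf Hh x eps He. destruct (continuity_pt_eps h (f x) (Hh x) eps He) as [d [Hd Hs]].
  destruct (Hf x d Hd) as [U [HU [HUx HUy]]]. exists U. split; [exact HU|split; [exact HUx|]].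
  intros y Hy. apply Hs. apply HUy. exact Hy.
Qed.

Lemma rcont_const (c : R) : rcontinuous X (fun _ => c).
Proof.
  intros x eps He. exists (fun _ => True). split; [apply open_full|split; [exact I|]].
  intros y _. unfold Rminus. rewrite Rplus_opp_r, Rabs_R0. exact He.
Qed.

Lemma rcont_plus (f g : X -> R) :
  rcontinuous X f -> rcontinuous X g -> rcontinuous X (fun x => f x + g x).
Proof.
  intros Hf Hg x eps He.
  destruct (Hf x (eps/2)) as [U [HU [HUx HUy]]]; [lra|].
  destruct (Hg x (eps/2)) as [V [HV [HVx HVy]]]; [lra|].
  exists (fun y => U y /\ V y). split; [apply open_inter; assumption|split; [tauto|]].
  intros y [Hy1 Hy2]. specialize (HUy y Hy1). specialize (HVy y Hy2).
  replace (f y + g y - (f x + g x)) with ((f y - f x) + (g y - g x)) by ring.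
  eapply Rle_lt_trans; [apply Rabs_triang|]. lra.
Qed.

Lemma rcont_scal (c : R) (f : X -> R) : rcontinuous X f -> rcontinuous X (fun x => c * f x).
Proof.
  intros Hf. apply (rcont_comp f (fun t => c * t)); [exact Hf|].
  intros x. apply continuity_pt_scal, derivable_continuous_pt, derivable_pt_id.
Qed.

Lemma rcont_minus (f g : X -> R) :
  rcontinuous X f -> rcontinuous X g -> rcontinuous X (fun x => f x - g x).
Proof.
  intros Hf Hg. apply (rcont_ext (fun x => f x + -1 * g x)); [intros; ring|].
  apply rcont_plus; [exact Hf|apply rcont_scal; exact Hg].
Qed.

Lemma rcont_abs (f : X -> R) : rcontinuous X f -> rcontinuous X (fun x => Rabs (f x)).
Proof. intros Hf. apply (rcont_comp f Rabs); [exact Hf|]. intros x. apply Rcontinuity_abs. Qed.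

(* polarization: f g = ((f + g)^2 - (f - g)^2) / 4 *)
Lemma rcont_mult (f g : X -> R) :
  rcontinuous X f -> rcontinuous X g -> rcontinuous X (fun x => f x * g x).
Proof.
  intros Hf Hg.
  assert (Hsq : forall u, rcontinuous X u -> rcontinuous X (fun x => u x * u x)).
  { intros u Hu. apply (rcont_comp u (fun t => t * t)); [exact Hu|]. intros x.
    apply continuity_pt_mult; apply derivable_continuous_pt, derivable_pt_id. }
  apply (rcont_ext (fun x => /4 * ((f x + g x) * (f x + g x) - (f x - g x) * (f x - g x)))).
  { intros; field. }
  apply rcont_scal, rcont_minus; apply Hsq; [apply rcont_plus|apply rcont_minus]; assumption.
Qed.

Lemma rcont_min (f g : X -> R) :
  rcontinuous X f -> rcontinuous X g -> rcontinuous X (fun x => Rmin (f x) (g x)).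
Proof.
  intros Hf Hg. apply (rcont_ext (fun x => /2 * (f x + g x - Rabs (f x - g x)))).
  { intros y. unfold Rmin. destruct (Rle_dec (f y) (g y)).
    - rewrite Rabs_left1 by lra. field.
    - rewrite Rabs_right by lra. field. }
  apply rcont_scal, rcont_minus; [apply rcont_plus|apply rcont_abs, rcont_minus]; assumption.
Qed.

Lemma rcont_inv (f : X -> R) :
  rcontinuous X f -> (forall x, f x <> 0) -> rcontinuous X (fun x => / f x).
Proof.
  intros Hf Hnz. apply (rcont_comp f (fun t => / t)); [exact Hf|]. intros x.
  apply (continuity_pt_inv (fun t => t)); [apply derivable_continuous_pt, derivable_pt_id|apply Hnz].
Qed.

Definition mkC (f : X -> R) (H : rcontinuous X f) : CX X := exist _ f H.

Lemma ev_mkC f H x : ev (mkC f H) x = f x.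
Proof. reflexivity. Qed.

Lemma ev_cont (g : CX X) : rcontinuous X (ev g).
Proof. destruct g as [g Hg]. exact Hg. Qed.

Lemma ev_f0 x : ev (f0 X) x = 0.
Proof. reflexivity. Qed.

Lemma CX_ext (g h : CX X) : (forall x, ev g x = ev h x) -> g = h.
Proof.
  destruct g as [g Hg], h as [h Hh]. unfold ev; simpl. intros E.
  assert (g = h) by (apply functional_extensionality; exact E). subst h.
  f_equal. apply proof_irrelevance.
Qed.

Definition csub (g h : CX X) : CX X := mkC _ (rcont_minus _ _ (ev_cont g) (ev_cont h)).
Definition cconst (c : R) : CX X := mkC _ (rcont_const c).

Lemma ev_csub g h x : ev (csub g h) x = ev g x - ev h x.
Proof. reflexivity. Qed.

Lemma ev_cconst c x : ev (cconst c) x = c.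
Proof. reflexivity. Qed.

End Continuity.

Arguments rcont_comp {X}. Arguments rcont_plus {X}. Arguments rcont_const {X}.
Arguments rcont_scal {X}. Arguments rcont_minus {X}. Arguments rcont_abs {X}.
Arguments rcont_mult {X}. Arguments rcont_min {X}. Arguments rcont_inv {X}.
Arguments ev_cont {X}. Arguments CX_ext {X}. Arguments csub {X}. Arguments cconst {X}.

Section PositiveBelow.
Variables (c t : nat -> R).
Hypothesis c_pos : forall k, 0 < c k.
Hypothesis t_ge : forall k, INR k <= t k.

Fixpoint min_upto (M : nat) (s : R) : R :=
  match M with
  | O => Rmin 1 (c 0 + Rabs (s - t 0))
  | S M' => Rmin (min_upto M' s) (c (S M') + Rabs (s - t (S M')))
  end.

Lemma min_upto_pos M s : 0 < min_upto M s.
Proof.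
  assert (forall k, 0 < c k + Rabs (s - t k))
    by (intros k; specialize (c_pos k); pose proof (Rabs_pos (s - t k)); lra).
  induction M; simpl; apply Rmin_glb_lt; auto; lra.
Qed.

Lemma min_upto_le1 M s : min_upto M s <= 1.
Proof. induction M; simpl; [apply Rmin_l|eapply Rle_trans; [apply Rmin_l|exact IHM]]. Qed.

Lemma min_upto_le M k s : (k <= M)%nat -> min_upto M s <= c k + Rabs (s - t k).
Proof.
  induction M; intros Hk.
  - replace k with O by lia. apply Rmin_r.
  - destruct (Nat.eq_dec k (S M)) as [->|Hne]; [apply Rmin_r|].
    eapply Rle_trans; [apply Rmin_l|]. apply IHM. lia.
Qed.

Lemma min_upto_cont M s : continuity_pt (min_upto M) s.
Proof.
  induction M; simpl; apply continuity_pt_min; auto using continuity_pt_dist_plus.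
  apply continuity_pt_const. intros ? ?; reflexivity.
Qed.

(* Since t k >= k, the terms with k > s + 1 exceed 1 and do not change the minimum. *)
Lemma min_upto_stable M j s : s + 1 < INR (S M) -> min_upto (M + j) s = min_upto M s.
Proof.
  intros H. induction j; [rewrite Nat.add_0_r; reflexivity|].
  rewrite Nat.add_succ_r. simpl. rewrite <- IHj. apply Rmin_left.
  assert (INR (S M) <= INR (S (M + j))) by (apply le_INR; lia).
  pose proof (min_upto_le1 (M + j) s). pose proof (t_ge (S (M + j))).
  pose proof (c_pos (S (M + j))). pose proof (Rle_abs (t (S (M + j)) - s)).
  rewrite Rabs_minus_sym. lra.
Qed.

Lemma min_upto_eq M1 M2 s :
  s + 1 < INR (S M1) -> s + 1 < INR (S M2) -> min_upto M1 s = min_upto M2 s.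
Proof.
  intros H1 H2. destruct (Nat.le_ge_cases M1 M2) as [Hle|Hle].
  - replace M2 with (M1 + (M2 - M1))%nat by lia. rewrite min_upto_stable; auto.
  - replace M1 with (M2 + (M1 - M2))%nat by lia. rewrite min_upto_stable; auto.
Qed.

Definition index_above (s : R) : nat := Z.to_nat (up (Rabs s)).

Lemma index_above_spec s : s + 1 < INR (S (index_above s)).
Proof.
  unfold index_above. rewrite S_INR. destruct (archimed (Rabs s)) as [H1 _].
  pose proof (Rle_abs s). pose proof (Rabs_pos s).
  assert (Hz : (0 <= up (Rabs s))%Z) by (apply le_IZR; simpl; lra).
  rewrite INR_IZR_INZ, Z2Nat.id by exact Hz. lra.
Qed.

Definition min_below (s : R) : R := min_upto (index_above s) s.

Lemma min_below_cont s0 : continuity_pt min_below s0.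
Proof.
  apply (continuity_pt_locally_ext (min_upto (S (index_above s0))) _ 1);
    [lra| |apply min_upto_cont].
  intros y Hy. unfold min_below. apply min_upto_eq; [|apply index_above_spec].
  pose proof (index_above_spec s0). rewrite S_INR.
  unfold Rdist in Hy. pose proof (Rle_abs (y - s0)). lra.
Qed.

Lemma min_below_le k : min_below (t k) <= c k.
Proof.
  unfold min_below. eapply Rle_trans; [apply (min_upto_le _ k)|].
  - pose proof (index_above_spec (t k)) as H. rewrite S_INR in H.
    pose proof (t_ge k). apply INR_le. lra.
  - unfold Rminus. rewrite Rplus_opp_r, Rabs_R0. lra.
Qed.

End PositiveBelow.

Lemma exists_positive_continuous_below (c t : nat -> R) :
  (forall k, 0 < c k) -> (forall k, INR k <= t k) ->
  exists h : R -> R, (forall s, continuity_pt h s) /\ (forall s, 0 < h s) /\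
    (forall k, h (t k) <= c k).
Proof.
  intros Hc Ht. exists (min_below c t).
  split; [|split]; intros; [apply min_below_cont|apply min_upto_pos|apply min_below_le]; auto.
Qed.

Section Topologies.
Variable X : TopSpace.

Lemma Cp_open_point_ball (x : X) (r : R) : Cp_open X (fun g => Rabs (ev g x) < r).
Proof.
  intros g Hg. exists (x :: nil), (r - Rabs (ev g x)). split; [lra|].
  intros g' Hg'. specialize (Hg' x (or_introl eq_refl)).
  pose proof (Rabs_triang_sub (ev g' x) (ev g x) 0). rewrite !Rminus_0_r in H. lra.
Qed.

Lemma Cm_ball_open (h e : CX X) : (forall x, 0 < ev e x) ->
  Cm_open X (fun g => forall x, Rabs (ev g x - ev h x) < ev e x).
Proof.
  intros He g Hg.
  assert (Hc : rcontinuous X (fun x => ev e x - Rabs (ev g x - ev h x))).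
  { apply rcont_minus; [apply ev_cont|apply rcont_abs, rcont_minus; apply ev_cont]. }
  exists (mkC X _ Hc). split.
  - intros x. rewrite ev_mkC. specialize (Hg x). lra.
  - intros g' Hg' x. specialize (Hg' x). rewrite ev_mkC in Hg'.
    pose proof (Rabs_triang_sub (ev g' x) (ev g x) (ev h x)). lra.
Qed.

Lemma Cm_open_full : Cm_open X (fun _ => True).
Proof. intros g _. exists (cconst 1). split; [intros; rewrite ev_cconst; lra|auto]. Qed.

Lemma Cm_open_inter U V : Cm_open X U -> Cm_open X V -> Cm_open X (fun t => U t /\ V t).
Proof.
  intros HU HV f [Hf1 Hf2]. destruct (HU f Hf1) as [e1 [He1 H1]]. destruct (HV f Hf2) as [e2 [He2 H2]].
  exists (mkC X _ (rcont_min _ _ (ev_cont e1) (ev_cont e2))). split.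
  - intros x. rewrite ev_mkC. apply Rmin_glb_lt; auto.
  - intros g Hg. split; [apply H1|apply H2]; intros x; specialize (Hg x); rewrite ev_mkC in Hg.
    + pose proof (Rmin_l (ev e1 x) (ev e2 x)). lra.
    + pose proof (Rmin_r (ev e1 x) (ev e2 x)). lra.
Qed.

End Topologies.

Definition tent (s : R) : R := Rmax 0 (1 - Rabs s).

Lemma tent_cont s : continuity_pt tent s.
Proof.
  unfold tent. apply (continuity_pt_locally_ext (fun s => / 2 * ((1 - Rabs s) + Rabs (1 - Rabs s))) _ 1);
    [lra| |].
  - intros y _. unfold Rmax. destruct (Rle_dec 0 (1 - Rabs y)).
    + rewrite (Rabs_right (1 - Rabs y)) by lra. field.
    + rewrite (Rabs_left (1 - Rabs y)) by lra. field.
  - assert (Ha : continuity_pt (fun s => 1 - Rabs s) s).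
    { apply (continuity_pt_minus (fun _ => 1) Rabs); [|apply Rcontinuity_abs].
      apply continuity_pt_const; intros ? ?; reflexivity. }
    apply (continuity_pt_scal (fun s => (1 - Rabs s) + Rabs (1 - Rabs s))).
    apply (continuity_pt_plus (fun s => 1 - Rabs s) (fun s => Rabs (1 - Rabs s))); [exact Ha|].
    apply (continuity_pt_comp (fun s => 1 - Rabs s) Rabs); [exact Ha|apply Rcontinuity_abs].
Qed.

Lemma tent_0 : tent 0 = 1.
Proof. unfold tent. rewrite Rabs_R0, Rminus_0_r. apply Rmax_right. lra. Qed.

Lemma tent_far s : 1 <= Rabs s -> tent s = 0.
Proof. intros H. apply Rmax_left. lra. Qed.

Lemma tent_bounds s : 0 <= tent s <= 1.
Proof. unfold tent. pose proof (Rabs_pos s). split; [apply Rmax_l|apply Rmax_lub; lra]. Qed.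

Section Unbounded.
Variable X : TopSpace.
Variable f : X -> R.
Hypothesis f_cont : rcontinuous X f.

Lemma positive_below_at (c : nat -> R) (xs : nat -> X) :
  (forall k, 0 < c k) -> (forall k, INR k <= f (xs k)) ->
  exists e : CX X, (forall x, 0 < ev e x) /\ forall k, ev e (xs k) <= c k.
Proof.
  intros Hc Hxs.
  destruct (exists_positive_continuous_below c (fun k => f (xs k)) Hc Hxs) as [h [Hhc [Hhp Hhk]]].
  exists (mkC X _ (rcont_comp f h f_cont (fun x => Hhc (f x)))). split; intros; apply Hhp || apply Hhk.
Qed.

Hypothesis f_unbounded : forall k : nat, exists x, INR k <= f x.

Fixpoint sum_abs (l : list (CX X)) (x : X) : R :=
  match l with nil => 0 | a :: l' => Rabs (ev a x) + sum_abs l' x end.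

Lemma sum_abs_nonneg l x : 0 <= sum_abs l x.
Proof. induction l; simpl; [lra|]. pose proof (Rabs_pos (ev a x)). lra. Qed.

Lemma sum_abs_ge l a x : In a l -> Rabs (ev a x) <= sum_abs l x.
Proof.
  induction l as [|b l IH]; simpl; [tauto|]. pose proof (sum_abs_nonneg l x).
  pose proof (Rabs_pos (ev b x)). intros [->|Hin]; [|specialize (IH Hin)]; lra.
Qed.

(* Choosing x_n with f x_n >= n, the neighbourhoods |g(x_n)| < 1 defeat every choice of finite
   sets A_n: a function with g(x_n) > 1 + sum of |a(x_n)| over A_n escapes every A_n + U_n. *)
Lemma not_Mbounded : ~ Mbounded X (Cp_open X).
Proof.
  intros HM. destruct (choice_fun _ f_unbounded) as [xs Hxs].
  set (U := fun n (g : CX X) => Rabs (ev g (xs n)) < 1).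
  destruct (HM U) as [A HA].
  { intros n. exists (U n). split; [apply Cp_open_point_ball|].
    split; [unfold U; rewrite ev_f0, Rabs_R0; lra|tauto]. }
  set (C := fun n => 1 + sum_abs (A n) (xs n)).
  assert (Cpos : forall n, 0 < C n)
    by (intros n; pose proof (sum_abs_nonneg (A n) (xs n)); unfold C; lra).
  destruct (positive_below_at (fun n => / C n) xs) as [e [He Hek]];
    [intros; apply Rinv_0_lt_compat, Cpos|exact Hxs|].
  set (g := mkC X _ (rcont_inv _ (ev_cont e) (fun x => Rgt_not_eq _ _ (He x)))).
  destruct (HA g) as [n [a [Ha [u [Hu Hgu]]]]].
  specialize (Hgu (xs n)). unfold g in Hgu. rewrite ev_mkC in Hgu.
  assert (H1 : C n <= / ev e (xs n)).
  { rewrite <- (Rinv_inv (C n)). apply Rinv_le_contravar; [apply He|apply Hek]. }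
  pose proof (sum_abs_ge (A n) a (xs n) Ha). unfold U in Hu. unfold C in H1.
  pose proof (Rle_abs (ev a (xs n))). pose proof (Rle_abs (ev u (xs n))). lra.
Qed.

(* The positive functions accumulate at f0; a countable family s_k of them is kept away from f0
   by a positive e with e(x_k) <= s_k(x_k). *)
Lemma not_countable_tightness : ~ countable_tightness (CX X) (Cm_open X).
Proof.
  intros HT. destruct (choice_fun _ f_unbounded) as [xs Hxs].
  set (A := fun g : CX X => forall x, 0 < ev g x).
  assert (Hcl : closure (CX X) (Cm_open X) A (f0 X)).
  { intros U HU HU0. destruct (HU _ HU0) as [e [He Hball]].
    exists (mkC X _ (rcont_scal (/ 2) _ (ev_cont e))). split.
    - intros x. rewrite ev_mkC. specialize (He x). lra.
    - apply Hball. intros x. rewrite ev_mkC, ev_f0, Rminus_0_r. specialize (He x).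
      rewrite Rabs_right by lra. lra. }
  destruct (HT A (f0 X) Hcl) as [B [HBA [[s Hs] HBcl]]].
  set (c := fun k => let v := ev (s k) (xs k) in if Rlt_dec 0 v then v else 1).
  destruct (positive_below_at c xs) as [e [He Hek]]; [|exact Hxs|].
  { intros k. unfold c. destruct (Rlt_dec 0 (ev (s k) (xs k))); lra. }
  destruct (HBcl _ (Cm_ball_open X (f0 X) e He)) as [b [Hb Hbu]].
  { intros x. rewrite ev_f0, Rminus_0_r, Rabs_R0. apply He. }
  destruct (Hs b Hb) as [k <-].
  specialize (HBA _ Hb (xs k)). specialize (Hbu (xs k)). specialize (Hek k).
  rewrite ev_f0, Rminus_0_r, Rabs_right in Hbu by lra.
  unfold c in Hek. simpl in Hek. destruct (Rlt_dec 0 (ev (s k) (xs k))); lra.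
Qed.

Definition vanishing_far (g : CX X) : Prop := exists N : nat, forall x, INR N <= f x -> ev g x = 0.

Definition nonzero_beyond (n : nat) (g : CX X) : Prop := exists x, INR n <= f x /\ ev g x <> 0.

Lemma vanishing_far_closed : Cm_open X (fun g => ~ vanishing_far g).
Proof.
  intros g Hg.
  assert (Hy : forall k : nat, exists y, INR k <= f y /\ ev g y <> 0).
  { intros k. apply NNPP. intros Hk. apply Hg. exists k. intros x Hx.
    apply NNPP. intros Hne. apply Hk. exists x. auto. }
  destruct (choice_fun _ Hy) as [ys Hys].
  destruct (positive_below_at (fun k => Rabs (ev g (ys k)) / 2) ys) as [e [He Hek]].
  { intros k. pose proof (Rabs_pos_lt _ (proj2 (Hys k))). lra. }
  { intros k. apply Hys. }
  exists e. split; [exact He|]. intros g' Hg' [N HN]. specialize (Hg' (ys N)). specialize (Hek N).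
  rewrite (HN (ys N) (proj1 (Hys N))), Rminus_0_l, Rabs_Ropp in Hg'.
  pose proof (Rabs_pos_lt _ (proj2 (Hys N))). simpl in Hek. lra.
Qed.

Lemma nonzero_beyond_open n : Cm_open X (nonzero_beyond n).
Proof.
  intros g [x [Hx Hgx]]. pose proof (Rabs_pos_lt _ Hgx).
  exists (cconst (Rabs (ev g x) / 2)). split; [intros; rewrite ev_cconst; lra|].
  intros g' Hg'. exists x. split; [exact Hx|]. specialize (Hg' x). rewrite ev_cconst in Hg'.
  intros H0. rewrite H0, Rminus_0_l, Rabs_Ropp in Hg'. lra.
Qed.

(* A small bump e/2 * tent (f - f x) placed at a point x with f x >= n + N keeps g vanishing far
   out while making it nonzero at x. *)
Lemma nonzero_beyond_dense n : dense_in (CX X) (Cm_open X) vanishing_far (nonzero_beyond n).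
Proof.
  intros O HO [g [[N HN] HOg]].
  destruct (HO g HOg) as [e [He Hball]].
  destruct (f_unbounded (n + N)) as [x Hx]. rewrite plus_INR in Hx.
  pose proof (pos_INR n). pose proof (pos_INR N).
  assert (Hbc : rcontinuous X (fun z => ev g z + / 2 * ev e z * tent (f z - f x))).
  { apply rcont_plus; [apply ev_cont|]. apply rcont_mult; [apply rcont_scal, ev_cont|].
    apply (rcont_comp (fun z => f z - f x) tent); [|intros; apply tent_cont].
    apply rcont_minus; [exact f_cont|apply rcont_const]. }
  exists (mkC X _ Hbc). split; [|split].
  - destruct (exists_nat_ge (f x + 1)) as [N1 HN1]. exists (N + N1)%nat.
    intros z Hz. rewrite plus_INR in Hz. pose proof (pos_INR N1).
    rewrite ev_mkC, HN, tent_far by (try rewrite Rabs_right; lra). ring.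
  - apply Hball. intros z. rewrite ev_mkC.
    replace (ev g z + / 2 * ev e z * tent (f z - f x) - ev g z)
      with (/ 2 * ev e z * tent (f z - f x)) by ring.
    specialize (He z). pose proof (tent_bounds (f z - f x)).
    rewrite Rabs_right by (apply Rle_ge, Rmult_le_pos; lra). nra.
  - exists x. split; [lra|]. rewrite ev_mkC, HN by lra.
    rewrite Rminus_diag, tent_0. specialize (He x). lra.
Qed.

(* The closed set of functions vanishing far out is not Baire: it is covered by the nowhere dense
   sets of functions vanishing beyond n. *)
Lemma not_hereditarily_Baire : ~ hereditarily_Baire (CX X) (Cm_open X).
Proof.
  intros HB.
  destruct (HB vanishing_far vanishing_far_closed nonzero_beyond nonzero_beyond_open
              nonzero_beyond_dense (fun _ => True) (Cm_open_full X)) as [t [[N HN] [_ HW]]].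
  { exists (f0 X). split; [exists O; intros; reflexivity|exact I]. }
  destruct (HW N) as [x [Hx Htx]]. exact (Htx (HN x Hx)).
Qed.

End Unbounded.

Lemma not_pseudocompact_unbounded (X : TopSpace) : ~ pseudocompact X ->
  exists f : X -> R, rcontinuous X f /\ forall k : nat, exists x, INR k <= f x.
Proof.
  intros Hn. apply not_all_ex_not in Hn. destruct Hn as [f Hf].
  apply imply_to_and in Hf. destruct Hf as [Hc Hnb].
  exists (fun x => Rabs (f x)). split; [apply rcont_abs; exact Hc|].
  intros k. apply NNPP. intros Hk. apply Hnb. exists (INR k). intros x.
  apply Rnot_lt_le. intros Hlt. apply Hk. exists x. lra.
Qed.

Lemma pseudocompact_by_contradiction (X : TopSpace) (P : Prop) :
  (forall f, rcontinuous X f -> (forall k : nat, exists x, INR k <= f x) -> ~ P) ->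
  P -> pseudocompact X.
Proof.
  intros HnP HP. apply NNPP. intros Hn.
  destruct (not_pseudocompact_unbounded X Hn) as [f [Hfc Hfk]]. exact (HnP f Hfc Hfk HP).
Qed.

Lemma floor_nat (r d : R) : 0 <= r -> 0 < d -> exists k : nat, INR k * d <= r < INR (S k) * d.
Proof.
  intros Hr Hd. destruct (archimed (r / d)) as [H1 H2].
  assert (Hrd : 0 <= r / d) by (apply Rmult_le_pos; [lra|left; apply Rinv_0_lt_compat; lra]).
  assert (Hz : (0 < up (r / d))%Z) by (apply lt_IZR; simpl; lra).
  exists (Z.to_nat (up (r / d) - 1)%Z).
  assert (E : INR (Z.to_nat (up (r / d) - 1)%Z) = IZR (up (r / d)) - 1).
  { rewrite INR_IZR_INZ, Z2Nat.id by lia. rewrite minus_IZR. reflexivity. }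
  assert (Er : r = r / d * d) by (field; lra).
  rewrite S_INR, E. set (q := r / d) in *. rewrite Er. split; nra.
Qed.

Section PointwiseNets.
Variable X : TopSpace.

(* Induction on F: slice P by the value at the new point into strips of width eps/2. *)
Lemma finite_net (F : list X) (n eps : R) : 0 < eps -> forall P : CX X -> Prop,
  exists A : list (CX X), (forall a, In a A -> P a) /\
    forall g, P g -> (forall x, In x F -> Rabs (ev g x) <= n) ->
      exists a, In a A /\ forall x, In x F -> Rabs (ev g x - ev a x) < eps.
Proof.
  intros Heps. induction F as [|x F IH]; intros P.
  - destruct (classic (exists g, P g)) as [[g Hg]|Hno].
    + exists (g :: nil). split; [intros a [<-|[]]; exact Hg|].
      intros g' _ _. exists g. split; [left; reflexivity|intros x []].
    + exists nil. split; [intros a []|]. intros g Hg. exfalso. eauto.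
  - set (d := eps / 2). assert (Hd : 0 < d) by (unfold d; lra).
    set (strip := fun (k : nat) (g : CX X) => P g /\ Rabs (ev g x - (- n + INR k * d)) < d).
    destruct (choice_fun _ (fun k => IH (strip k))) as [Ak HAk].
    destruct (exists_nat_ge (2 * Rabs n / d)) as [K HK].
    exists (flat_map Ak (seq 0 (S K))). split.
    + intros a Ha. apply in_flat_map in Ha. destruct Ha as [k [_ Hk]]. apply (proj1 (HAk k) a Hk).
    + intros g Hg Hb. pose proof (Hb x (or_introl eq_refl)) as Hgx.
      destruct (floor_nat (ev g x + n) d) as [k [Hk1 Hk2]]; [|exact Hd|].
      { pose proof (Rle_abs (ev g x)). pose proof (Rle_abs (- ev g x)). rewrite Rabs_Ropp in *. lra. }
      assert (Hsl : strip k g).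
      { split; [exact Hg|]. rewrite S_INR in Hk2. apply Rabs_def1; nra. }
      destruct (proj2 (HAk k) g Hsl (fun y Hy => Hb y (or_intror Hy))) as [a [Ha Hga]].
      exists a. split.
      * apply in_flat_map. exists k. split; [|exact Ha]. apply in_seq. split; [lia|].
        enough (INR k <= INR K) by (apply INR_le in H; lia).
        pose proof (Rle_abs n). pose proof (Rle_abs (ev g x)).
        assert (2 * Rabs n / d * d = 2 * Rabs n) by (field; lra).
        apply (Rmult_le_reg_r d); nra.
      * intros y [<-|Hy]; [|exact (Hga y Hy)].
        destruct (proj1 (HAk k) a Ha) as [_ Ha2]. destruct Hsl as [_ Hg2].
        pose proof (Rabs_triang_sub (ev g x) (- n + INR k * d) (ev a x)).
        rewrite Rabs_minus_sym in Ha2. unfold d in *. lra.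
Qed.

Lemma bounded_in_finitely_many_translates (U : CX X -> Prop) (n : R) : exists A : list (CX X),
  nbhd0 X (Cp_open X) U -> forall g, (forall x, Rabs (ev g x) <= n) -> plusset X A U g.
Proof.
  destruct (classic (nbhd0 X (Cp_open X) U)) as [[O [HO [HO0 HOU]]]|HU];
    [|exists nil; intros H; contradiction].
  destruct (HO _ HO0) as [F [eps [Heps Hball]]].
  destruct (finite_net F n eps Heps (fun _ => True)) as [A [_ HA]].
  exists A. intros _ g Hg. destruct (HA g I (fun x _ => Hg x)) as [a [Ha Hga]].
  exists a. split; [exact Ha|]. exists (csub g a). split.
  - apply HOU, Hball. intros x Hx. rewrite ev_csub, ev_f0, Rminus_0_r. apply Hga, Hx.
  - intros x. rewrite ev_csub. ring.
Qed.

(* In round n, TWO covers all functions bounded by n + 1. *)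
Definition bounded_strategy (hist : list (CX X -> Prop)) : list (CX X) :=
  proj1_sig (constructive_indefinite_description _
     (bounded_in_finitely_many_translates (last hist (fun _ => True)) (INR (length hist)))).

Lemma history_last (U : nat -> (CX X -> Prop)) n : last (history U n) (fun _ => True) = U n.
Proof. unfold history. rewrite seq_S, map_app. apply last_last. Qed.

Lemma history_length (U : nat -> (CX X -> Prop)) n : length (history U n) = S n.
Proof. unfold history. rewrite length_map, length_seq. reflexivity. Qed.

Theorem pseudocompact_strictly_Hbounded : pseudocompact X -> strictly_Hbounded X (Cp_open X).
Proof.
  intros Hpc. exists bounded_strategy. intros U HU g.
  destruct (Hpc (ev g) (ev_cont g)) as [M HM].
  destruct (exists_nat_ge M) as [N HN]. exists N. intros n Hn.
  unfold bounded_strategy. destruct (constructive_indefinite_description _ _) as [A HA]. simpl.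
  rewrite history_last, history_length in HA.
  apply HA; [apply HU|]. intros x. eapply Rle_trans; [apply HM|].
  assert (INR N <= INR (S n)) by (apply le_INR; lia). lra.
Qed.

Lemma strictly_Hbounded_Hbounded op : strictly_Hbounded X op -> Hbounded X op.
Proof. intros [sigma Hs] U HU. exists (fun n => sigma (history U n)). apply Hs, HU. Qed.

Lemma strictly_Hbounded_strictly_Mbounded op : strictly_Hbounded X op -> strictly_Mbounded X op.
Proof.
  intros [sigma Hs]. exists sigma. intros U HU g. destruct (Hs U HU g) as [N HN].
  exists N. apply HN. lia.
Qed.

Lemma strictly_Mbounded_Mbounded op : strictly_Mbounded X op -> Mbounded X op.
Proof. intros [sigma Hs] U HU. exists (fun n => sigma (history U n)). apply Hs, HU. Qed.

Lemma Hbounded_Mbounded op : Hbounded X op -> Mbounded X op.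
Proof.
  intros Hh U HU. destruct (Hh U HU) as [A HA]. exists A. intros g. destruct (HA g) as [N HN].
  exists N. apply HN. lia.
Qed.

End PointwiseNets.

Section Tightness.
Variable T : Type.
Variable op : (T -> Prop) -> Prop.

Lemma completely_metrizable_first_countable : completely_metrizable T op -> first_countable T op.
Proof.
  intros [d [Hd0 [Hdz [Hds [Hdt [Hop _]]]]]] y.
  exists (fun n t => d y t < / (INR n + 1)). split.
  - intros n. assert (0 < / (INR n + 1)) by (apply Rinv_0_lt_compat; pose proof (pos_INR n); lra).
    split.
    + apply Hop. intros t Ht. exists (/ (INR n + 1) - d y t). split; [lra|].
      intros z Hz. specialize (Hdt y t z). lra.
    + assert (d y y = 0) by (apply Hdz; reflexivity). lra.
  - intros U HU HUy. destruct (proj1 (Hop U) HU y HUy) as [r [Hr Hball]].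
    destruct (exists_inv_succ_le r Hr) as [n Hn]. exists n. intros t Ht. apply Hball. lra.
Qed.

Hypothesis op_inter : forall U V, op U -> op V -> op (fun t => U t /\ V t).

Lemma first_countable_strictly_Frechet_Urysohn :
  first_countable T op -> strictly_Frechet_Urysohn T op.
Proof.
  intros Hfc A y HA. destruct (Hfc y) as [B [HB Hbase]].
  set (Bi := fix Bi (n : nat) : T -> Prop :=
         match n with O => B O | S m => fun t => Bi m t /\ B (S m) t end).
  assert (HBi : forall n, op (Bi n) /\ Bi n y).
  { induction n; simpl; [apply HB|].
    split; [apply op_inter; [apply IHn|apply HB]|split; [apply IHn|apply HB]]. }
  assert (HBmon : forall n m t, (n <= m)%nat -> Bi m t -> B n t).
  { intros n m t Hnm. induction Hnm; [destruct n; simpl; tauto|simpl; tauto]. }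
  destruct (choice_fun (fun n a => A n a /\ Bi n a)) as [a Ha].
  { intros n. exact (HA n (Bi n) (proj1 (HBi n)) (proj2 (HBi n))). }
  exists a. split; [intros n; apply Ha|].
  intros U HU HUy. destruct (Hbase U HU HUy) as [n Hn]. exists n. intros m Hm.
  apply Hn, (HBmon n m); [exact Hm|apply Ha].
Qed.

Lemma strictly_Frechet_Urysohn_strong_fan_tightness :
  strictly_Frechet_Urysohn T op -> countable_strong_fan_tightness T op.
Proof.
  intros H A y HA. destruct (H A y HA) as [a [Ha Hc]]. exists a. split; [exact Ha|].
  intros U HU HUy. destruct (Hc U HU HUy) as [N HN].
  exists (a N). split; [exists N; reflexivity|apply HN; lia].
Qed.

Lemma strong_fan_tightness_fan_tightness :
  countable_strong_fan_tightness T op -> countable_fan_tightness T op.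
Proof.
  intros H A y HA. destruct (H A y HA) as [b [Hb Hc]]. exists (fun n => b n :: nil). split.
  - intros n t [<-|[]]. apply Hb.
  - intros U HU HUy. destruct (Hc U HU HUy) as [t [[n Hn] Ht]].
    exists t. split; [exists n; left; exact Hn|exact Ht].
Qed.

Lemma fan_tightness_countable_tightness :
  countable_fan_tightness T op -> countable_tightness T op.
Proof.
  intros H A y HA. destruct (H (fun _ => A) y (fun _ => HA)) as [B [HB Hc]].
  exists (fun t => exists n, In t (B n)). split; [|split; [|exact Hc]].
  - intros b [n Hn]. exact (HB n b Hn).
  - exists (fun m => nth (snd (of_nat m)) (B (fst (of_nat m))) y).
    intros b [n Hn]. destruct (In_nth _ _ y Hn) as [i [_ Hi]].
    exists (to_nat (n, i)). rewrite cancel_of_to. exact Hi.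
Qed.

End Tightness.

Section SupMetric.
Variable X : TopSpace.

Definition truncated_gaps (f g : CX X) (r : R) : Prop :=
  r = 0 \/ exists x, r = Rmin 1 (Rabs (ev f x - ev g x)).

Lemma truncated_gaps_bound f g : bound (truncated_gaps f g).
Proof. exists 1. intros r [->|[x ->]]; [lra|apply Rmin_l]. Qed.

(* sup_x min(1, |f x - g x|); the 0 in truncated_gaps only makes the set visibly nonempty *)
Definition Cdist (f g : CX X) : R :=
  proj1_sig (completeness _ (truncated_gaps_bound f g) (ex_intro _ 0 (or_introl eq_refl))).

Lemma Cdist_lub f g : is_lub (truncated_gaps f g) (Cdist f g).
Proof. unfold Cdist. apply proj2_sig. Qed.

Lemma Cdist_ge f g x : Rmin 1 (Rabs (ev f x - ev g x)) <= Cdist f g.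
Proof. apply (proj1 (Cdist_lub f g)). right. exists x. reflexivity. Qed.

Lemma Cdist_nonneg f g : 0 <= Cdist f g.
Proof. apply (proj1 (Cdist_lub f g)). left. reflexivity. Qed.

Lemma Cdist_le f g r : 0 <= r -> (forall x, Rmin 1 (Rabs (ev f x - ev g x)) <= r) -> Cdist f g <= r.
Proof. intros H0 H. apply (proj2 (Cdist_lub f g)). intros s [->|[x ->]]; auto. Qed.

Lemma Cdist_le1 f g : Cdist f g <= 1.
Proof. apply Cdist_le; [lra|]. intros; apply Rmin_l. Qed.

Lemma Cdist_le_pointwise f g r :
  0 <= r -> (forall x, Rabs (ev f x - ev g x) <= r) -> Cdist f g <= r.
Proof. intros H0 H. apply Cdist_le; [exact H0|]. intros x. eapply Rle_trans; [apply Rmin_r|apply H]. Qed.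

Lemma Cdist_lt_pointwise f g r : Cdist f g < r -> r <= 1 -> forall x, Rabs (ev f x - ev g x) < r.
Proof.
  intros H Hr x. pose proof (Cdist_ge f g x). unfold Rmin in H0.
  destruct (Rle_dec 1 (Rabs (ev f x - ev g x))); lra.
Qed.

Lemma Cdist_sym f g : Cdist f g = Cdist g f.
Proof.
  apply Rle_antisym; apply Cdist_le; try apply Cdist_nonneg; intros x;
    rewrite Rabs_minus_sym; apply Cdist_ge.
Qed.

Lemma Cdist_triangle f g h : Cdist f h <= Cdist f g + Cdist g h.
Proof.
  apply Cdist_le; [pose proof (Cdist_nonneg f g); pose proof (Cdist_nonneg g h); lra|].
  intros x. pose proof (Cdist_ge f g x). pose proof (Cdist_ge g h x).
  pose proof (Rabs_triang_sub (ev f x) (ev g x) (ev h x)).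
  pose proof (Rabs_pos (ev f x - ev g x)). pose proof (Rabs_pos (ev g x - ev h x)).
  unfold Rmin in *. repeat destruct Rle_dec; lra.
Qed.

Lemma Cdist_zero f g : Cdist f g = 0 <-> f = g.
Proof.
  split.
  - intros H. apply CX_ext. intros x. pose proof (Cdist_ge f g x) as H1. rewrite H in H1.
    unfold Rmin in H1. destruct (Rle_dec 1 (Rabs (ev f x - ev g x))); [lra|].
    apply Rminus_diag_uniq, NNPP. intros Hne. apply Rabs_pos_lt in Hne. lra.
  - intros ->. apply Rle_antisym; [|apply Cdist_nonneg]. apply Cdist_le_pointwise; [lra|].
    intros x. rewrite Rminus_diag, Rabs_R0. lra.
Qed.

Lemma Cdist_refl f : Cdist f f = 0.
Proof. apply Cdist_zero. reflexivity. Qed.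

Lemma pseudocompact_positive_lower_bound (e : CX X) : pseudocompact X -> (forall x, 0 < ev e x) ->
  exists r, 0 < r /\ forall x, r <= ev e x.
Proof.
  intros Hpc He.
  destruct (Hpc _ (rcont_inv (ev e) (ev_cont e) (fun x => Rgt_not_eq _ _ (He x)))) as [M HM].
  exists (/ (Rabs M + 1)). split; [apply Rinv_0_lt_compat; pose proof (Rabs_pos M); lra|].
  intros x. specialize (HM x). specialize (He x). pose proof (Rinv_0_lt_compat _ He).
  rewrite Rabs_right in HM by lra. pose proof (Rle_abs M).
  rewrite <- (Rinv_inv (ev e x)). apply Rinv_le_contravar; lra.
Qed.

(* A positive continuous function on a pseudocompact space is bounded away from 0, so every
   m-neighbourhood contains a uniform one. *)
Lemma Cm_open_iff_Cdist_open U : pseudocompact X ->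
  (Cm_open X U <-> forall f, U f -> exists r, 0 < r /\ forall g, Cdist f g < r -> U g).
Proof.
  intros Hpc. split.
  - intros HU f Hf. destruct (HU f Hf) as [e [He Hball]].
    destruct (pseudocompact_positive_lower_bound e Hpc He) as [r [Hr Hre]].
    exists (Rmin 1 r). split; [apply Rmin_glb_lt; lra|].
    intros g Hg. apply Hball. intros x.
    pose proof (Cdist_lt_pointwise f g (Rmin 1 r) Hg (Rmin_l _ _) x) as H.
    rewrite Rabs_minus_sym in H. specialize (Hre x). pose proof (Rmin_r 1 r). lra.
  - intros HU f Hf. destruct (HU f Hf) as [r [Hr Hball]].
    assert (0 < Rmin r 1) by (apply Rmin_glb_lt; lra).
    exists (cconst (Rmin r 1 / 2)). split; [intros; rewrite ev_cconst; lra|].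
    intros g Hg. apply Hball.
    assert (Cdist f g <= Rmin r 1 / 2).
    { apply Cdist_le_pointwise; [lra|]. intros x. specialize (Hg x). rewrite ev_cconst in Hg.
      rewrite Rabs_minus_sym. lra. }
    pose proof (Rmin_l r 1). lra.
Qed.

Lemma uniform_limit_continuous (s : nat -> CX X) (L : X -> R) :
  (forall eps, 0 < eps -> exists N, forall n x, (N <= n)%nat -> Rabs (ev (s n) x - L x) <= eps) ->
  rcontinuous X L.
Proof.
  intros HuL x eps He. destruct (HuL (eps / 3)) as [N HN]; [lra|].
  destruct (ev_cont (s N) x (eps / 3)) as [U [HU [HUx HUy]]]; [lra|].
  exists U. split; [exact HU|split; [exact HUx|]]. intros y Hy.
  specialize (HUy y Hy). pose proof (HN N y (le_n _)). pose proof (HN N x (le_n _)).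
  pose proof (Rabs_triang_sub (L y) (ev (s N) y) (L x)).
  pose proof (Rabs_triang_sub (ev (s N) y) (ev (s N) x) (L x)).
  rewrite Rabs_minus_sym in H. lra.
Qed.

Lemma Cdist_complete (s : nat -> CX X) :
  (forall eps, 0 < eps -> exists N, forall m n,
     (N <= m)%nat -> (N <= n)%nat -> Cdist (s m) (s n) < eps) ->
  exists l, forall eps, 0 < eps -> exists N, forall n, (N <= n)%nat -> Cdist (s n) l < eps.
Proof.
  intros Hc.
  assert (Hu : forall eps, 0 < eps -> exists N, forall m n x, (N <= m)%nat -> (N <= n)%nat ->
                Rabs (ev (s m) x - ev (s n) x) < eps).
  { intros eps He. destruct (Hc (Rmin eps 1)) as [N HN]; [apply Rmin_glb_lt; lra|].
    exists N. intros m n x Hm Hn. pose proof (Cdist_lt_pointwise _ _ _ (HN m n Hm Hn) (Rmin_r _ _) x).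
    pose proof (Rmin_l eps 1). lra. }
  assert (Hcc : forall x, Cauchy_crit (fun n => ev (s n) x)).
  { intros x eps He. destruct (Hu eps He) as [N HN]. exists N. intros n m Hn Hm. apply HN; lia. }
  destruct (choice_fun (fun (x : X) l => Un_cv (fun n => ev (s n) x) l)) as [L HL].
  { intros x. destruct (R_complete _ (Hcc x)) as [l Hl]. exists l. exact Hl. }
  assert (HuL : forall eps, 0 < eps ->
    exists N, forall n x, (N <= n)%nat -> Rabs (ev (s n) x - L x) <= eps).
  { intros eps He. destruct (Hu eps He) as [N HN]. exists N. intros n x Hn.
    apply Rnot_lt_le. intros Hlt.
    destruct (HL x (Rabs (ev (s n) x - L x) - eps)) as [M HM]; [lra|].
    specialize (HM (Nat.max M N) (Nat.le_max_l _ _)). unfold Rdist in HM.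
    specialize (HN n (Nat.max M N) x Hn (Nat.le_max_r _ _)).
    pose proof (Rabs_triang_sub (ev (s n) x) (ev (s (Nat.max M N)) x) (L x)). lra. }
  exists (mkC X L (uniform_limit_continuous s L HuL)). intros eps He.
  assert (0 < Rmin eps 1) by (apply Rmin_glb_lt; lra).
  destruct (HuL (Rmin eps 1 / 2)) as [N HN]; [lra|].
  exists N. intros n Hn. apply Rle_lt_trans with (Rmin eps 1 / 2).
  - apply Cdist_le_pointwise; [lra|]. intros x. rewrite ev_mkC. apply HN, Hn.
  - pose proof (Rmin_l eps 1). lra.
Qed.

Theorem pseudocompact_completely_metrizable :
  pseudocompact X -> completely_metrizable (CX X) (Cm_open X).
Proof.
  intros Hpc. exists Cdist.
  split; [apply Cdist_nonneg|split; [apply Cdist_zero|split; [apply Cdist_sym|]]].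
  split; [apply Cdist_triangle|split; [|apply Cdist_complete]].
  intros U. apply Cm_open_iff_Cdist_open, Hpc.
Qed.

End SupMetric.

Section CompactHausdorff.
Variable K : TopSpace.

Notation clK := (closure K (isopen K)).

Lemma isopen_local (P : K -> Prop) :
  (forall k, P k -> exists V, isopen K V /\ V k /\ forall k', V k' -> P k') -> isopen K P.
Proof.
  intros H.
  replace P with (fun x => exists U, (isopen K U /\ forall k', U k' -> P k') /\ U x).
  - apply open_union. intros U [HU _]. exact HU.
  - apply functional_extensionality. intros x. apply propositional_extensionality. split.
    + intros [U [[_ HU] Hx]]. apply HU, Hx.
    + intros Hx. destruct (H x Hx) as [V [HV [HVx HVP]]]. exists V. tauto.
Qed.

Lemma closure_self (A : K -> Prop) k : A k -> clK A k.
Proof. intros Hk V' _ HV'. exists k. auto. Qed.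

Lemma closure_mono (A B : K -> Prop) k : (forall x, A x -> B x) -> clK A k -> clK B k.
Proof. intros H Hk V' HV' HV'k. destruct (Hk V' HV' HV'k) as [k' [H1 H2]]. exists k'. auto. Qed.

Lemma closure_closed (A : K -> Prop) : isopen K (fun k => ~ clK A k).
Proof.
  apply isopen_local. intros k Hk. apply not_all_ex_not in Hk. destruct Hk as [V Hk].
  apply imply_to_and in Hk. destruct Hk as [HV Hk]. apply imply_to_and in Hk. destruct Hk as [HVk Hk].
  exists V. split; [exact HV|split; [exact HVk|]]. intros k' Hk' Hcl.
  apply Hk, (Hcl V HV Hk').
Qed.

Lemma closed_inter (A B : K -> Prop) : isopen K (fun k => ~ A k) -> isopen K (fun k => ~ B k) ->
  isopen K (fun k => ~ (A k /\ B k)).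
Proof.
  intros HA HB. apply isopen_local. intros k Hk. apply not_and_or in Hk.
  destruct Hk as [Hk|Hk]; [exists (fun k => ~ A k)|exists (fun k => ~ B k)]; split; auto; tauto.
Qed.

Lemma compact_finite_subcover_bound (C : nat -> K -> Prop) (L : list (K -> Prop)) :
  (forall n m k, (n <= m)%nat -> C m k -> C n k) ->
  (forall U, In U L -> exists n, U = (fun k => ~ C n k)) ->
  exists N, forall U k, In U L -> C N k -> ~ U k.
Proof.
  intros Hmon. induction L as [|U L IH]; intros HL; [exists O; intros U k []|].
  destruct IH as [N HN]; [intros U' HU'; apply HL; right; exact HU'|].
  destruct (HL U (or_introl eq_refl)) as [m ->].
  exists (Nat.max N m). intros U' k [<-|HU'] HCk.
  - intros Hn. apply Hn, (Hmon m (Nat.max N m)); [lia|exact HCk].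
  - apply (HN U' k HU'), (Hmon N (Nat.max N m)); [lia|exact HCk].
Qed.

Lemma isopen_finite_inter (V : nat -> K -> Prop) n :
  (forall m, isopen K (V m)) -> isopen K (fun x => forall m, (m <= n)%nat -> V m x).
Proof.
  intros HV. induction n.
  - replace (fun x => forall m, (m <= 0)%nat -> V m x) with (V O); [apply HV|].
    apply functional_extensionality. intros x. apply propositional_extensionality.
    split; [intros H m Hm; replace m with O by lia; exact H|intros H; apply H; lia].
  - replace (fun x => forall m, (m <= S n)%nat -> V m x)
      with (fun x => (forall m, (m <= n)%nat -> V m x) /\ V (S n) x); [apply open_inter; auto|].
    apply functional_extensionality. intros x. apply propositional_extensionality. split.
    + intros [H1 H2] m Hm. destruct (Nat.eq_dec m (S n)) as [->|Hne]; [exact H2|apply H1; lia].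
    + intros H. split; [intros m Hm; apply H; lia|apply H; lia].
Qed.

Hypothesis K_compact : Defs.compact K.

Lemma compact_decreasing_closed (C : nat -> K -> Prop) :
  (forall n, isopen K (fun k => ~ C n k)) ->
  (forall n m k, (n <= m)%nat -> C m k -> C n k) ->
  (forall n, exists k, C n k) ->
  exists k, forall n, C n k.
Proof.
  intros HCo Hmon HCne. apply NNPP. intros Hno.
  destruct (K_compact (fun U => exists n, U = (fun k => ~ C n k))) as [L [HL HLc]].
  - intros U [n ->]. apply HCo.
  - intros k. apply NNPP. intros Hk. apply Hno. exists k. intros n. apply NNPP. intros Hn.
    apply Hk. exists (fun k => ~ C n k). split; [exists n; reflexivity|exact Hn].
  - destruct (compact_finite_subcover_bound C L Hmon HL) as [N HN].
    destruct (HCne N) as [k HCk]. destruct (HLc k) as [U [HUL HUk]]. exact (HN U k HUL HCk HUk).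
Qed.

Hypothesis K_hausdorff : hausdorff K.

(* Cover K by Y and the open sets disjoint from some neighbourhood of p; intersect the finitely
   many neighbourhoods of p used by a finite subcover. *)
Lemma compact_hausdorff_regular (Y : K -> Prop) p : isopen K Y -> Y p ->
  exists V, isopen K V /\ V p /\ forall k, clK V k -> Y k.
Proof.
  intros HY HYp.
  set (Fam := fun U : K -> Prop => U = Y \/
          exists P, isopen K P /\ P p /\ isopen K U /\ forall w, ~ (P w /\ U w)).
  destruct (K_compact Fam) as [L [HL HLc]].
  - intros U [->|[P [_ [_ [HU _]]]]]; auto.
  - intros k. destruct (classic (Y k)) as [Hk|Hk]; [exists Y; split; [left|]; auto|].
    assert (Hne : p <> k) by (intros ->; contradiction).
    destruct (K_hausdorff p k Hne) as [P [U [HP [HU [HPp [HUk Hdis]]]]]].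
    exists U. split; [right; exists P; tauto|exact HUk].
  - assert (Hfinite : forall L, (forall U, In U L -> Fam U) ->
       exists V, isopen K V /\ V p /\ forall U k, In U L -> clK V k -> U k -> Y k).
    { induction L0 as [|U L0 IH]; intros HL0.
      - exists (fun _ => True). split; [apply open_full|split; [exact I|]]. intros U k [].
      - destruct IH as [V [HV [HVp HVY]]]; [intros U' HU'; apply HL0; right; exact HU'|].
        destruct (HL0 U (or_introl eq_refl)) as [->|[P [HP [HPp [HU Hdis]]]]].
        + exists V. split; [exact HV|split; [exact HVp|]].
          intros U' k [<-|HU'] Hcl HUk; [exact HUk|exact (HVY U' k HU' Hcl HUk)].
        + exists (fun x => V x /\ P x). split; [apply open_inter; assumption|split; [tauto|]].
          intros U' k [<-|HU'] Hcl HUk.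
          * destruct (Hcl U HU HUk) as [k' [[_ HPk'] HUk']]. exfalso. apply (Hdis k'). tauto.
          * apply (HVY U' k HU'); [|exact HUk]. exact (closure_mono _ _ k (fun x Hx => proj1 Hx) Hcl). }
    destruct (Hfinite L HL) as [V [HV [HVp HVY]]]. exists V. split; [exact HV|split; [exact HVp|]].
    intros k Hk. destruct (HLc k) as [U [HUL HUk]]. exact (HVY U k HUL Hk HUk).
Qed.

End CompactHausdorff.

(* Baire's argument inside the compactification K: shrink open sets V n meeting F, with the closure
   of V (n+1) inside V n, W n and the n-th G_delta set; compactness gives a common point, which lies
   in the image of T. *)
Theorem Cech_complete_hereditarily_Baire (T : Type) (op : (T -> Prop) -> Prop) :
  Cech_complete T op -> hereditarily_Baire T op.
Proof.
  intros [K [e [Hc [Hh [_ [Hcont [Hemb [_ [Gd [HGdo HGd]]]]]]]]]].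
  intros F HF W HWo HWd O HO [t0 [HFt0 HOt0]].
  set (clK := closure K (isopen K)).
  destruct (Hemb _ HF) as [Q [HQ HQe]].
  destruct (Hemb _ HO) as [O' [HO' HO'e]].
  destruct (choice_fun (fun n W' => isopen K W' /\ forall t, W n t <-> W' (e t))) as [W' HW'];
    [intros n; apply Hemb, HWo|].
  set (meets_F := fun V : K -> Prop => isopen K V /\ exists t, F t /\ V (e t)).
  set (shrinks := fun n (V V' : K -> Prop) => forall k, clK V' k -> V k /\ W' n k /\ Gd n k).
  assert (Hstep : forall n V, meets_F V -> exists V', meets_F V' /\ shrinks n V V').
  { intros n V [HV [t [HFt HVt]]].
    destruct (HWd n (fun t => V (e t))) as [t1 [HFt1 [HVt1 HWt1]]];
      [apply Hcont, HV|exists t; auto|].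
    destruct (compact_hausdorff_regular K Hc Hh (fun k => V k /\ W' n k /\ Gd n k) (e t1))
      as [V' [HV' [HV't1 HV'c]]].
    - apply open_inter; [exact HV|apply open_inter; [apply HW'|apply HGdo]].
    - split; [exact HVt1|split; [apply HW'; exact HWt1|apply HGd; exists t1; reflexivity]].
    - exists V'. split; [split; [exact HV'|exists t1; auto]|exact HV'c]. }
  destruct (compact_hausdorff_regular K Hc Hh O' (e t0) HO') as [V0 [HV0 [HV0t HV0c]]];
    [apply HO'e; exact HOt0|].
  destruct (dependent_choice meets_F shrinks V0) as [V [HVV0 HV]];
    [split; [exact HV0|exists t0; auto]|exact Hstep|].
  set (C := fun n k => clK (V n) k /\ clK (fun k => exists t, F t /\ e t = k) k).
  destruct (compact_decreasing_closed K Hc C) as [k Hk].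
  - intros n. apply closed_inter; apply closure_closed.
  - intros n m k Hnm. induction Hnm; [auto|]. intros [H1 H2]. apply IHHnm.
    split; [apply closure_self, (proj2 (HV m) k H1)|exact H2].
  - intros n. destruct (proj1 (HV n)) as [_ [t [HFt HVt]]]. exists (e t).
    split; apply closure_self; [exact HVt|exists t; auto].
  - destruct (proj1 (HGd k) (fun n => proj2 (proj2 (proj2 (HV n) k (proj1 (Hk (S n))))))) as [t <-].
    exists t. split; [|split].
    + apply NNPP. intros HFt. apply HQe in HFt.
      destruct (proj2 (Hk 0%nat) Q HQ HFt) as [s [[u [HFu <-]] HQs]]. apply HQe in HQs. contradiction.
    + apply HO'e, HV0c. rewrite <- HVV0. exact (proj1 (Hk 0%nat)).
    + intros n. apply HW', (proj2 (HV n) (e t) (proj1 (Hk (S n)))).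
Qed.

(* The compactification is the closure of the image of t |-> (Cdist t i)_i in [0,1]^(C(X)). *)
Section CechCompactification.
Variable X : TopSpace.
Hypothesis X_pc : pseudocompact X.

Definition in_image_closure (y : CX X -> R) : Prop :=
  forall (l : list (CX X)) eps, 0 < eps -> exists t, forall i, In i l -> Rabs (Cdist X t i - y i) < eps.

Definition Kpt := {y : CX X -> R | in_image_closure y}.

Definition Kbox (k : Kpt) (l : list (CX X)) (eps : R) (k' : Kpt) : Prop :=
  forall i, In i l -> Rabs (proj1_sig k' i - proj1_sig k i) < eps.

Definition Kopen (V : Kpt -> Prop) : Prop :=
  forall k, V k -> exists l eps, 0 < eps /\ forall k', Kbox k l eps k' -> V k'.

Lemma Kopen_full : Kopen (fun _ => True).
Proof. intros k _. exists nil, 1. split; [lra|auto]. Qed.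

Lemma Kopen_inter U V : Kopen U -> Kopen V -> Kopen (fun x => U x /\ V x).
Proof.
  intros HU HV k [Hk1 Hk2].
  destruct (HU k Hk1) as [l1 [e1 [He1 H1]]]. destruct (HV k Hk2) as [l2 [e2 [He2 H2]]].
  exists (l1 ++ l2), (Rmin e1 e2). split; [apply Rmin_glb_lt; lra|].
  intros k' Hb. pose proof (Rmin_l e1 e2). pose proof (Rmin_r e1 e2). split.
  - apply H1. intros i Hi. specialize (Hb i (in_or_app _ _ _ (or_introl Hi))). lra.
  - apply H2. intros i Hi. specialize (Hb i (in_or_app _ _ _ (or_intror Hi))). lra.
Qed.

Lemma Kopen_union (F : (Kpt -> Prop) -> Prop) : (forall U, F U -> Kopen U) ->
  Kopen (fun x => exists U, F U /\ U x).
Proof.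
  intros HF k [U [HFU HUk]]. destruct (HF U HFU k HUk) as [l [eps [He H]]].
  exists l, eps. split; [exact He|]. intros k' Hb. exists U. auto.
Qed.

Definition Ksp : TopSpace := mkTop Kpt Kopen Kopen_full Kopen_inter Kopen_union.

Lemma in_image_closure_image (t : CX X) : in_image_closure (fun i => Cdist X t i).
Proof. intros l eps He. exists t. intros i _. rewrite Rminus_diag, Rabs_R0. exact He. Qed.

Definition eK (t : CX X) : Ksp := exist _ (fun i => Cdist X t i) (in_image_closure_image t).

Lemma Kpt_eq (k1 k2 : Kpt) : proj1_sig k1 = proj1_sig k2 -> k1 = k2.
Proof. destruct k1, k2. simpl. intros ->. f_equal. apply proof_irrelevance. Qed.

Lemma Kopen_coordinate_lt (t : CX X) (r : R) : isopen Ksp (fun k : Kpt => proj1_sig k t < r).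
Proof.
  intros k Hk. exists (t :: nil), (r - proj1_sig k t). split; [lra|].
  intros k' Hb. specialize (Hb t (or_introl eq_refl)).
  pose proof (Rle_abs (proj1_sig k' t - proj1_sig k t)). lra.
Qed.

Lemma Kopen_coordinate_ball (i : CX X) (c r : R) :
  isopen Ksp (fun k : Kpt => Rabs (proj1_sig k i - c) < r).
Proof.
  intros k Hk. exists (i :: nil), (r - Rabs (proj1_sig k i - c)). split; [lra|].
  intros k' Hb. specialize (Hb i (or_introl eq_refl)).
  pose proof (Rabs_triang_sub (proj1_sig k' i) (proj1_sig k i) c). lra.
Qed.

Lemma in_image_closure_bounds y : in_image_closure y -> forall i, 0 <= y i <= 1.
Proof.
  intros Hy i. split; apply Rnot_lt_le; intros Hlt.
  - destruct (Hy (i :: nil) (- y i)) as [t Ht]; [lra|].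
    specialize (Ht i (or_introl eq_refl)). pose proof (Cdist_nonneg X t i).
    pose proof (Rle_abs (Cdist X t i - y i)). lra.
  - destruct (Hy (i :: nil) (y i - 1)) as [t Ht]; [lra|].
    specialize (Ht i (or_introl eq_refl)). pose proof (Cdist_le1 X t i).
    pose proof (Rle_abs (- (Cdist X t i - y i))). rewrite Rabs_Ropp in *. lra.
Qed.

Lemma in_image_closure_closed y : (forall (l : list (CX X)) (eps : R), 0 < eps ->
  exists z, in_image_closure z /\ forall i, In i l -> Rabs (z i - y i) < eps) -> in_image_closure y.
Proof.
  intros H l eps He. destruct (H l (eps / 2)) as [z [Hz Hzl]]; [lra|].
  destruct (Hz l (eps / 2)) as [t Ht]; [lra|]. exists t. intros i Hi.
  specialize (Ht i Hi). specialize (Hzl i Hi).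
  pose proof (Rabs_triang_sub (Cdist X t i) (z i) (y i)). lra.
Qed.

Lemma Ksp_compact : Defs.compact Ksp.
Proof.
  intros Fam HFo HFc.
  set (lift := fun (U : Kpt -> Prop) (y : CX X -> R) => exists h : in_image_closure y, U (exist _ y h)).
  destruct (CubeCompactness.closed_subset_of_cube_compact (CX X) in_image_closure
              in_image_closure_bounds in_image_closure_closed
              (fun U' => exists U, Fam U /\ U' = lift U)) as [L' [HL' HL'c]].
  - intros U' [U [HFU ->]] y Sy [h Hh]. destruct (HFo U HFU _ Hh) as [l [eps [He Hb]]].
    exists l, eps. split; [exact He|]. intros z Sz Hz. exists Sz. apply Hb. exact Hz.
  - intros y Sy. destruct (HFc (exist _ y Sy)) as [U [HFU HUy]].
    exists (lift U). split; [exists U; auto|exists Sy; exact HUy].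
  - destruct (list_choice (fun U' U => Fam U /\ U' = lift U) L' HL') as [L [HL1 HL2]].
    exists L. split; [intros U HU; destruct (HL1 U HU) as [U' [HFU _]]; exact HFU|].
    intros k. destruct (HL'c (proj1_sig k) (proj2_sig k)) as [U' [HU'L HU'k]].
    destruct (HL2 U' HU'L) as [U [HUL [_ ->]]]. exists U. split; [exact HUL|].
    destruct HU'k as [h Hh]. replace k with (exist in_image_closure (proj1_sig k) h); [exact Hh|].
    apply Kpt_eq. reflexivity.
Qed.

Lemma Ksp_hausdorff : hausdorff Ksp.
Proof.
  intros k1 k2 Hne.
  assert (Hi : exists i, proj1_sig k1 i <> proj1_sig k2 i).
  { apply NNPP. intros Hno. apply Hne, Kpt_eq, functional_extensionality. intros i.
    apply NNPP. intros H. apply Hno. exists i. exact H. }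
  destruct Hi as [i Hi]. set (r := Rabs (proj1_sig k1 i - proj1_sig k2 i) / 2).
  assert (Hr : 0 < r) by (unfold r; pose proof (Rabs_pos_lt (proj1_sig k1 i - proj1_sig k2 i)); lra).
  exists (fun k : Kpt => Rabs (proj1_sig k i - proj1_sig k1 i) < r),
         (fun k : Kpt => Rabs (proj1_sig k i - proj1_sig k2 i) < r).
  split; [apply Kopen_coordinate_ball|split; [apply Kopen_coordinate_ball|]].
  rewrite !Rminus_diag, !Rabs_R0. split; [exact Hr|split; [exact Hr|]].
  intros z [H1 H2]. pose proof (Rabs_triang_sub (proj1_sig k1 i) (proj1_sig z i) (proj1_sig k2 i)).
  rewrite Rabs_minus_sym in H1. unfold r in *. lra.
Qed.

Lemma eK_injective t1 t2 : eK t1 = eK t2 -> t1 = t2.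
Proof.
  intros H. apply (f_equal (fun k : Kpt => proj1_sig k t1)) in H. simpl in H.
  rewrite Cdist_refl in H. symmetry. apply Cdist_zero. symmetry. exact H.
Qed.

Lemma eK_continuous (W : Ksp -> Prop) : isopen Ksp W -> Cm_open X (fun t => W (eK t)).
Proof.
  intros HW. apply (Cm_open_iff_Cdist_open X _ X_pc). intros t Ht.
  destruct (HW _ Ht) as [l [eps [He Hb]]]. exists eps. split; [exact He|].
  intros t' Ht'. apply Hb. intros i _. simpl.
  pose proof (Cdist_triangle X t' t i). pose proof (Cdist_triangle X t t' i).
  rewrite (Cdist_sym X t' t) in *. apply Rabs_def1; lra.
Qed.

Lemma eK_open_image (O : CX X -> Prop) :
  Cm_open X O -> exists W, isopen Ksp W /\ forall t, O t <-> W (eK t).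
Proof.
  intros HCm. pose proof (proj1 (Cm_open_iff_Cdist_open X O X_pc) HCm) as HO.
  exists (fun k : Kpt => exists t r, 0 < r /\ (forall s, Cdist X t s < r -> O s) /\ proj1_sig k t < r).
  split.
  - apply isopen_local. intros k [t [r [Hr [Hball Hk]]]].
    exists (fun k : Kpt => proj1_sig k t < r). split; [apply Kopen_coordinate_lt|split; [exact Hk|]].
    intros k' Hk'. exists t, r. auto.
  - intros t. split.
    + intros Ht. destruct (HO t Ht) as [r [Hr Hball]]. exists t, r.
      simpl. rewrite Cdist_refl. auto.
    + intros [s [r [Hr [Hball Hs]]]]. apply Hball. simpl in Hs. rewrite Cdist_sym. exact Hs.
Qed.

Lemma eK_dense (W : Ksp -> Prop) k : isopen Ksp W -> W k -> exists t, W (eK t).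
Proof.
  intros HW Hk. destruct (HW k Hk) as [l [eps [He Hb]]].
  destruct (proj2_sig k l eps He) as [t Ht]. exists t. apply Hb. exact Ht.
Qed.

Definition small_nbhd (n : nat) (k : Ksp) : Prop :=
  exists V, isopen Ksp V /\ V k /\
    forall a b, V (eK a) -> V (eK b) -> Cdist X a b < / (INR n + 1).

Lemma small_nbhd_open n : isopen Ksp (small_nbhd n).
Proof.
  apply isopen_local. intros k [V [HV [HVk HVd]]].
  exists V. split; [exact HV|split; [exact HVk|]]. intros k' Hk'. exists V. auto.
Qed.

Lemma small_nbhd_image n t : small_nbhd n (eK t).
Proof.
  assert (Hp : 0 < / (3 * (INR n + 1))) by (apply Rinv_0_lt_compat; pose proof (pos_INR n); lra).
  exists (fun k : Kpt => proj1_sig k t < / (3 * (INR n + 1))).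
  split; [apply Kopen_coordinate_lt|split; [simpl; rewrite Cdist_refl; exact Hp|]].
  intros a b Ha Hb. simpl in Ha, Hb.
  pose proof (Cdist_triangle X a t b). rewrite (Cdist_sym X t b) in *.
  assert (/ (INR n + 1) = 3 * / (3 * (INR n + 1))) by (field; pose proof (pos_INR n); lra).
  lra.
Qed.

(* The traces of nested small neighbourhoods of k form a Cauchy sequence, whose limit must be k
   because K is Hausdorff. *)
Lemma small_nbhd_everywhere_image k : (forall n, small_nbhd n k) -> exists t, eK t = k.
Proof.
  intros Hk. destruct (choice_fun _ Hk) as [V HV].
  set (U := fun n x => forall m, (m <= n)%nat -> V m x).
  assert (HU : forall n, isopen Ksp (U n) /\ U n k).
  { intros n. split; [apply isopen_finite_inter; intros m; apply HV|intros m _; apply HV]. }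
  assert (Hnear : forall N n a b,
    (N <= n)%nat -> U n (eK a) -> V N (eK b) -> Cdist X a b < / (INR N + 1)).
  { intros N n a b HNn Ha Hb. apply (HV N); [apply Ha, HNn|exact Hb]. }
  destruct (choice_fun (fun n t => U n (eK t))) as [ts Hts].
  { intros n. exact (eK_dense (U n) k (proj1 (HU n)) (proj2 (HU n))). }
  destruct (Cdist_complete X ts) as [l Hl].
  { intros eps He. destruct (exists_inv_succ_le eps He) as [N HN]. exists N. intros m n Hm Hn.
    assert (Cdist X (ts m) (ts n) < / (INR N + 1))
      by (apply (Hnear N m); [|apply Hts|apply (Hts n)]; lia).
    lra. }
  exists l. apply NNPP. intros Hne.
  destruct (Ksp_hausdorff (eK l) k Hne) as [P [Q [HP [HQ [HPl [HQk Hdis]]]]]].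
  destruct (proj1 (Cm_open_iff_Cdist_open X _ X_pc) (eK_continuous P HP) l HPl) as [r [Hr Hball]].
  destruct (Hl (r / 2)) as [N1 HN1]; [lra|].
  destruct (exists_inv_succ_le (r / 2)) as [N2 HN2]; [lra|].
  set (N := Nat.max N1 N2).
  destruct (eK_dense (fun x => Q x /\ U N x) k) as [s [HQs HUs]];
    [apply open_inter; [exact HQ|apply HU]|split; [exact HQk|apply HU]|].
  assert (Cdist X s (ts N) < r / 2).
  { eapply Rlt_le_trans; [|exact HN2]. apply (Hnear N2 N); [unfold N; lia|exact HUs|].
    apply (Hts N). unfold N; lia. }
  assert (Cdist X (ts N) l < r / 2) by (apply HN1; unfold N; lia).
  pose proof (Cdist_triangle X l (ts N) s). rewrite (Cdist_sym X l (ts N)), (Cdist_sym X (ts N) s) in *.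
  apply (Hdis (eK s)). split; [apply Hball; lra|exact HQs].
Qed.

End CechCompactification.

Theorem pseudocompact_Cech_complete (X : TopSpace) :
  pseudocompact X -> Cech_complete (CX X) (Cm_open X).
Proof.
  intros Hpc. exists (Ksp X), (eK X).
  split; [apply Ksp_compact|split; [apply Ksp_hausdorff|split; [apply eK_injective|]]].
  split; [apply eK_continuous, Hpc|split; [apply eK_open_image, Hpc|split]].
  - intros W HW [k Hk]. exact (eK_dense X W k HW Hk).
  - exists (small_nbhd X). split; [apply small_nbhd_open|]. intros k. split.
    + apply small_nbhd_everywhere_image, Hpc.
    + intros [t <-] n. apply small_nbhd_image.
Qed.

Theorem theorem2p2 (X : TopSpace) (HX : tychonoff X) :
  (strictly_Hbounded X (Cp_open X) <-> pseudocompact X) /\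
  (Hbounded X (Cp_open X) <-> pseudocompact X) /\
  (strictly_Mbounded X (Cp_open X) <-> pseudocompact X) /\
  (Mbounded X (Cp_open X) <-> pseudocompact X) /\
  (first_countable (CX X) (Cm_open X) <-> pseudocompact X) /\
  (strictly_Frechet_Urysohn (CX X) (Cm_open X) <-> pseudocompact X) /\
  (countable_strong_fan_tightness (CX X) (Cm_open X) <-> pseudocompact X) /\
  (countable_fan_tightness (CX X) (Cm_open X) <-> pseudocompact X) /\
  (countable_tightness (CX X) (Cm_open X) <-> pseudocompact X) /\
  (completely_metrizable (CX X) (Cm_open X) <-> pseudocompact X) /\
  (Cech_complete (CX X) (Cm_open X) <-> pseudocompact X) /\
  (hereditarily_Baire (CX X) (Cm_open X) <-> pseudocompact X).

Proof.
  pose proof (pseudocompact_strictly_Hbounded X).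
  pose proof (strictly_Hbounded_Hbounded X (Cp_open X)).
  pose proof (strictly_Hbounded_strictly_Mbounded X (Cp_open X)).
  pose proof (strictly_Mbounded_Mbounded X (Cp_open X)).
  pose proof (Hbounded_Mbounded X (Cp_open X)).
  pose proof (pseudocompact_by_contradiction X _ (not_Mbounded X)).
  pose proof (pseudocompact_completely_metrizable X).
  pose proof (completely_metrizable_first_countable (CX X) (Cm_open X)).
  pose proof (first_countable_strictly_Frechet_Urysohn (CX X) (Cm_open X) (Cm_open_inter X)).
  pose proof (strictly_Frechet_Urysohn_strong_fan_tightness (CX X) (Cm_open X)).
  pose proof (strong_fan_tightness_fan_tightness (CX X) (Cm_open X)).
  pose proof (fan_tightness_countable_tightness (CX X) (Cm_open X)).
  pose proof (pseudocompact_by_contradiction X _ (not_countable_tightness X)).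
  pose proof (pseudocompact_Cech_complete X).
  pose proof (Cech_complete_hereditarily_Baire (CX X) (Cm_open X)).
  pose proof (pseudocompact_by_contradiction X _ (not_hereditarily_Baire X)).
  tauto.
Qed.
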